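(* Let $\mathbf A$ be a nonzero $m\times n$ real matrix and $\mathbf b\ne\mathbf 0$ such that $\mathbf A\mathbf x=\mathbf b$ is consistent, let $\alpha>0$, and let $\mathbf x^*$ be the unique solution of (P2). Let $f(\mathbf y):=-\mathbf b^\top\mathbf y+\frac{\alpha}{2}\|\mathrm{shrink}(\mathbf A^\top\mathbf y)\|_2^2$, so $\nabla f(\mathbf y)=-\mathbf b+\alpha\mathbf A\,\mathrm{shrink}(\mathbf A^\top\mathbf y)$, and let $\mathcal Y^*:=\{\mathbf y\in\mathbb R^m:\alpha\,\mathrm{shrink}(\mathbf A^\top\mathbf y)=\mathbf x^*\}$. Then for all $\mathbf y\in\mathbb R^m$, $$\langle\mathbf y-\mathrm{Proj}_{\mathcal Y^*}(\mathbf y),\nabla f(\mathbf y)\rangle\ge\nu\|\mathbf y-\mathrm{Proj}_{\mathcal Y^*}(\mathbf y)\|_2^2,\qquad \nu:=\lambda_{\mathbf A}\cdot\min_{i\in\mathrm{supp}(\mathbf x^* )}\frac{\alpha|x^*_i|}{|x^*_i|+2\alpha}>0,$$ where $\lambda_{\mathbf A}:=\min\{\lambda_{\min}^{++}(\mathbf C\mathbf C^\top):\ \mathbf C\text{ is a nonzero submatrix of }\mathbf A\text{ formed by a subset of its columns}\}$.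
   Context: Problem (P2) is $\min_{\mathbf x}\{\|\mathbf x\|_1+\frac{1}{2\alpha}\|\mathbf x\|_2^2:\ \mathbf A\mathbf x=\mathbf b\}$; $f$ is the objective of its Lagrange dual, and $\mathcal Y^*$ is the (nonempty, closed, convex) set of minimizers of $f$. $\mathrm{shrink}(\mathbf z)=\mathrm{sign}(\mathbf z)\max\{|\mathbf z|-\mathbf 1,\mathbf 0\}$ componentwise. $\mathrm{Proj}_{\mathcal Y^*}$ is Euclidean projection onto $\mathcal Y^*$. $\lambda_{\min}^{++}(\mathbf S)$ is the smallest strictly positive eigenvalue of a nonzero positive semidefinite $\mathbf S$. *)

From HB Require Import structures.
From mathcomp Require Import all_boot all_order all_algebra.
Set Implicit Arguments. Unset Strict Implicit. Unset Printing Implicit Defensive.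
Import Order.TTheory GRing.Theory Num.Theory.
Local Open Scope ring_scope.

Section Defs.
Variable R : rcfType.

Definition shrink n (z : 'cV[R]_n) : 'cV[R]_n :=
  \col_i (Num.sg (z i 0) * Num.max (`|z i 0| - 1) 0).

Definition norm1 n (x : 'cV[R]_n) : R := \sum_i `|x i 0|.
Definition norm2sq n (x : 'cV[R]_n) : R := \sum_i (x i 0) ^+ 2.
Definition inner n (u v : 'cV[R]_n) : R := \sum_i u i 0 * v i 0.

Definition P2obj n (alpha : R) (x : 'cV[R]_n) : R :=
  norm1 x + (2 * alpha)^-1 * norm2sq x.

Definition P2sol m n (A : 'M[R]_(m, n)) (b : 'cV[R]_m) (alpha : R) (x : 'cV[R]_n) :=
  A *m x = b /\ forall x' : 'cV[R]_n, A *m x' = b -> P2obj alpha x <= P2obj alpha x'.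

Definition fdual m n (A : 'M[R]_(m, n)) (b : 'cV[R]_m) (alpha : R) (y : 'cV[R]_m) : R :=
  - inner b y + alpha / 2 * norm2sq (shrink (A^T *m y)).
Definition gradf m n (A : 'M[R]_(m, n)) (b : 'cV[R]_m) (alpha : R) (y : 'cV[R]_m)
  : 'cV[R]_m := - b + alpha *: (A *m shrink (A^T *m y)).

Definition Ystar m n (A : 'M[R]_(m, n)) (alpha : R) (xs : 'cV[R]_n) (y : 'cV[R]_m) : Prop :=
  alpha *: shrink (A^T *m y) = xs.

Definition is_proj m (S : 'cV[R]_m -> Prop) (y p : 'cV[R]_m) : Prop :=
  S p /\ forall q, S q -> norm2sq (y - p) <= norm2sq (y - q).

Definition lambda_min_pp k (M : 'M[R]_k) (l : R) : Prop :=
  eigenvalue M l /\ 0 < l /\ forall l', eigenvalue M l' -> 0 < l' -> l <= l'.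

(* C is a nonzero submatrix of A formed by a subset of its columns:
   C = colsub f A with f injective (column selection, possibly reordered) *)
Definition lambdaA_set m n (A : 'M[R]_(m, n)) (l : R) : Prop :=
  exists k (f : 'I_k -> 'I_n), injective f /\ colsub f A != 0 /\
    lambda_min_pp (colsub f A *m (colsub f A)^T) l.

Definition is_lambdaA m n (A : 'M[R]_(m, n)) (l : R) : Prop :=
  lambdaA_set A l /\ forall l', lambdaA_set A l' -> l <= l'.

Definition is_supp_min n (alpha : R) (x : 'cV[R]_n) (c : R) : Prop :=
  (exists i, x i 0 != 0 /\ c = alpha * `|x i 0| / (`|x i 0| + 2 * alpha)) /\
  forall i, x i 0 != 0 -> c <= alpha * `|x i 0| / (`|x i 0| + 2 * alpha).

End Defs.

From HB Require Import structures.
From mathcomp Require Import all_boot all_order all_algebra.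
From mathcomp Require Import spectral complex.
From mathcomp Require Import ring lra.
Import Order.TTheory GRing.Theory Num.Theory.
Local Open Scope ring_scope.
Set Implicit Arguments. Unset Strict Implicit. Unset Printing Implicit Defensive.

(* Fix [y], let [p] be its projection onto [Y*] and [d = y - p]; put
   [v = A^T p] and [w = A^T d].  Since [alpha shrink v = xs] and [A xs = b],
   the pairing [<d, grad f(y)>] is the sum over the columns [j] of the
   nonnegative terms [alpha w_j (soft (v_j + w_j) - soft v_j)] ([inner_grad]).
   1. By optimality of [p], [d] makes a non-acute angle with every direction
      along which [p] stays in [Y*]; by Farkas' lemma with sign constraints,
      [d = C mu] for columns [C] of [A] and a coefficient vector [mu] whose
      signs respect the constraints active at [p], and by Caratheodory's
      theorem the columns may be taken independent ([conic_decomposition]).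
   2. For independent columns, [lambda_min^{++}(C C^T) |mu|^2 <= |C mu|^2]
      by the spectral theorem ([gram_lower_bound]); so [lambda_A |mu|^2 <= |d|^2].
   3. Every term with [mu_i w_j > 0] grows quadratically, [c w_j^2 <= term]
      ([growth_active]): a case analysis on the soft threshold.
   4. Young's inequality, summed over [i], combines 1-3 into
      [lambda_A c |d|^2 <= <d, grad f(y)>] ([weighted_descent]). *)

Section SoftThreshold.
Variable R : realFieldType.

Definition soft (t : R) : R := Num.sg t * Num.max (`|t| - 1) 0.

Lemma soft_ge1 t : 1 <= t -> soft t = t - 1.
Proof.
move=> t1; have t0 : 0 < t by lra.
by rewrite /soft gtr0_sg // mul1r gtr0_norm // max_l //; lra.
Qed.

Lemma soft_le1 t : t <= -1 -> soft t = t + 1.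
Proof.
move=> t1; have t0 : t < 0 by lra.
rewrite /soft ltr0_sg // ltr0_norm // max_l; [ring | lra].
Qed.

Lemma soft_mid t : -1 <= t <= 1 -> soft t = 0.
Proof.
by move=> /andP[t1 t2]; rewrite /soft max_r ?mulr0 // subr_le0 ler_norml t1.
Qed.

Lemma softN t : soft (- t) = - soft t.
Proof. by rewrite /soft sgrN normrN mulNr. Qed.

Lemma soft_cases t : [\/ 1 <= t /\ soft t = t - 1, t <= -1 /\ soft t = t + 1
  | [/\ -1 <= t, t <= 1 & soft t = 0]].
Proof.
have [t1|t1] := lerP 1 t; first by apply: Or31; rewrite soft_ge1.
have [t2|t2] := lerP t (-1); first by apply: Or32; rewrite soft_le1.
by apply: Or33; rewrite soft_mid ?ltW // ltW.
Qed.

Lemma soft_mono : {homo soft : a b / a <= b}.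
Proof.
move=> a b ab.
by case: (soft_cases a) => [[? ->]|[? ->]|[? ? ->]];
   case: (soft_cases b) => [[? ->]|[? ->]|[? ? ->]]; lra.
Qed.

(* Monotonicity of [soft] makes every scalar term of the gradient pairing
   nonnegative. *)
Lemma soft_incr_ge0 al v w : 0 <= al -> 0 <= al * w * (soft (v + w) - soft v).
Proof.
move=> al0; rewrite -mulrA mulr_ge0 //.
have [w0|w0] := lerP 0 w.
  by rewrite mulr_ge0 // subr_ge0 soft_mono //; lra.
by apply: mulr_le0; [exact: ltW | rewrite subr_le0 soft_mono //; lra].
Qed.

Lemma soft_growth_right (al c v w : R) : 0 < al -> 0 <= c -> 1 < v ->
  c * ((v - 1) + 2) <= al * (v - 1) ->
  c * w ^+ 2 <= al * w * (soft (v + w) - soft v).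
Proof.
move=> al0 c0 v1 h; rewrite (soft_ge1 (ltW v1)).
have cal : c <= al by nra.
case: (soft_cases (v + w)) => [[t1 ->]|[t1 ->]|[t1 t2 ->]].
- have -> : v + w - 1 - (v - 1) = w by ring.
  by rewrite -mulrA -expr2 ler_wpM2r // sqr_ge0.
- have a2 : 0 < (v - 1) + 2 by lra.
  suff : 0 <= ((v - 1) + 2) * (al * w * (v + w + 1 - (v - 1)) - c * w ^+ 2).
    by rewrite pmulr_rge0 // subr_ge0.
  have -> : ((v - 1) + 2) * (al * w * (v + w + 1 - (v - 1)) - c * w ^+ 2) =
      2 * al * (- w) * (- (w + (v - 1) + 2)) +
      (al * (v - 1) - c * ((v - 1) + 2)) * w ^+ 2 by ring.
  apply: addr_ge0; last by rewrite mulr_ge0 ?sqr_ge0 // subr_ge0.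
  by rewrite !mulr_ge0 //; lra.
- have e1 : c * w ^+ 2 <= c * ((v - 1) + 2) * (- w).
    have cw : 0 <= c * (- w) by rewrite mulr_ge0 //; lra.
    nra.
  apply: (le_trans e1); have -> : al * w * (0 - (v - 1)) = al * (v - 1) * (- w) by ring.
  by rewrite ler_wpM2r //; lra.
Qed.

(* Quadratic growth at a point where [soft] is nonzero, stated in terms of
   the value [x = al * soft v] of the primal solution: the constant
   [c <= al |x| / (|x| + 2 al)] is the one appearing in the theorem. *)
Lemma soft_growth_active (al c v w : R) : 0 < al -> 0 <= c -> soft v != 0 ->
  c * (`|al * soft v| + 2 * al) <= al * `|al * soft v| ->
  c * w ^+ 2 <= al * w * (soft (v + w) - soft v).
Proof.
move=> al0 c0 sv h.
case: (soft_cases v) => [[v1 sE]|[v1 sE]|[v1 v2 sE]]; last by rewrite sE eqxx in sv.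
- have {}v1 : 1 < v by apply: contraNT sv; rewrite -leNgt => v1'; rewrite soft_mid ?v1'; lra.
  apply: soft_growth_right => //; move: h; rewrite sE ger0_norm; last by nra.
  have -> : c * (al * (v - 1) + 2 * al) = al * (c * (v - 1 + 2)) by ring.
  by rewrite ler_pM2l.
- have {}v1 : v < -1 by apply: contraNT sv; rewrite -leNgt => v1'; rewrite soft_mid ?v1'; lra.
  have := @soft_growth_right al c (- v) (- w) al0 c0.
  rewrite -(opprD v w) !softN sqrrN.
  have -> : al * - w * (- soft (v + w) - - soft v) = al * w * (soft (v + w) - soft v) by ring.
  apply; first lra.
  move: h; rewrite sE ltr0_norm; last by nra.
  have -> : c * (- (al * (v + 1)) + 2 * al) = al * (c * (- v - 1 + 2)) by ring.
  have -> : al * - (al * (v + 1)) = al * (al * (- v - 1)) by ring.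
  by rewrite ler_pM2l.
Qed.

Lemma soft_growth_kink (al c w : R) : c <= al -> 0 < w ->
  c * w ^+ 2 <= al * w * (soft (1 + w) - soft 1).
Proof.
move=> ca w0; rewrite soft_ge1 ?soft_mid ?lexx ?andbT; [|lra|lra].
have -> : al * w * (1 + w - 1 - 0) = al * w ^+ 2 by ring.
by rewrite ler_wpM2r // sqr_ge0.
Qed.

Lemma soft_growth_kinkN (al c w : R) : c <= al -> w < 0 ->
  c * w ^+ 2 <= al * w * (soft (-1 + w) - soft (-1)).
Proof.
move=> ca w0; have := @soft_growth_kink al c (- w) ca.
have -> : -1 + w = - (1 - w) by ring.
rewrite !softN sqrrN.
have -> : al * - w * (soft (1 - w) - soft 1) = al * w * (- soft (1 - w) - - soft 1) by ring.
by apply; lra.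
Qed.

(* How far [t] may move, towards the inside of [-1, 1], without leaving it. *)
Definition slack (t : R) : R := if `|t| < 1 then 1 - `|t| else 1.

Lemma slack_gt0 t : 0 < slack t.
Proof. by rewrite /slack; case: ifP => // t1; rewrite subr_gt0. Qed.

Lemma soft_zero_step v s : -1 <= v <= 1 -> `|s| < slack v ->
  (v = 1 -> s <= 0) -> (v = -1 -> 0 <= s) -> soft (v + s) = 0.
Proof.
move=> /andP[v1 v2]; rewrite /slack; case: ifP => [v_in|v_out] hs h1 h2; apply: soft_mid.
  have : `|v + s| < 1 by apply: le_lt_trans (ler_normD _ _) _; lra.
  by rewrite ltr_norml => /andP[? ?]; apply/andP; split; lra.
move: hs; rewrite ltr_norml => /andP[s1 s2].
have [v_eq1|v_eqN1] : v = 1 \/ v = -1.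
  move/negbT: v_out; rewrite -leNgt; case: (lerP 0 v) => v0;
    [rewrite ger0_norm // => ?; left | rewrite ltr0_norm // => ?; right]; lra.
- by have := h1 v_eq1; move=> ?; apply/andP; split; lra.
- by have := h2 v_eqN1; move=> ?; apply/andP; split; lra.
Qed.

End SoftThreshold.

Section Farkas.
Variable R : realFieldType.

Lemma trmx_mul_entry m N (G : 'M[R]_(m, N)) (z : 'cV[R]_m) j :
  (G^T *m z) j 0 = \sum_i G i j * z i 0.
Proof. by rewrite mxE; apply: eq_bigr => i _; rewrite mxE. Qed.

Lemma entry_subZ m n (A B : 'M[R]_(m, n)) t i j : (A - t *: B) i j = A i j - t * B i j.
Proof. by rewrite !mxE. Qed.

Definition signed_by N (cp cn : 'I_N -> bool) (nu : 'cV[R]_N) : Prop :=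
  forall j, (0 < nu j 0 -> cp j) /\ (nu j 0 < 0 -> cn j).

Definition dual_signed_by N (cp cn : 'I_N -> bool) (g : 'cV[R]_N) : Prop :=
  forall j, (cp j -> g j 0 <= 0) /\ (cn j -> 0 <= g j 0).

Definition farkas_alt m N (cp cn : 'I_N -> bool) (G : 'M[R]_(m, N)) (d : 'cV[R]_m) :=
  (exists nu, signed_by cp cn nu /\ G *m nu = d) \/
  (exists z, dual_signed_by cp cn (G^T *m z) /\ 0 < (d^T *m z) 0 0).

Lemma farkas_inactive m N (cp cn : 'I_N -> bool) (G : 'M[R]_(m, N)) d :
  (forall j, ~~ cp j && ~~ cn j) -> farkas_alt cp cn G d.
Proof.
move=> inactive; have [->|d0] := eqVneq d 0.
  by left; exists 0; split; [move=> j; rewrite mxE ltxx | rewrite mulmx0].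
right; exists d; split.
  by move=> j; have /andP[/negbTE-> /negbTE->] := inactive j.
have sq_ge0 i : 0 <= d i 0 * d i 0 by rewrite -expr2 sqr_ge0.
rewrite trmx_mul_entry lt0r sumr_ge0 ?andbT //.
apply: contra d0 => /eqP dd0; apply/eqP/colP => i; rewrite mxE.
have /(_ i isT) /eqP := psumr_eq0P (fun i _ => sq_ge0 i) dd0.
by rewrite mulf_eq0 orbb => /eqP.
Qed.

(* Pivoting on [k]
   (projecting column [k] out along [z]) yields a smaller problem whose two
   alternatives both lift back to the original one. *)
Section Pivot.
Variables (m N : nat) (cp cn : 'I_N -> bool) (G : 'M[R]_(m, N)) (d z : 'cV[R]_m).
Variable k : 'I_N.
Let cp' j := cp j && (j != k).
Let cn' j := cn j && (j != k).
Hypothesis z_dual : dual_signed_by cp' cn' (G^T *m z).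
Hypothesis z_sep : 0 < (d^T *m z) 0 0.
Let g := (G^T *m z) k 0.
Hypothesis g_cp : 0 < g -> cp k.
Hypothesis g_cn : g < 0 -> cn k.
Hypothesis g_neq0 : g != 0.

(* Column [k] projected out along [z]: [pivot_mx^T z = 0]. *)
Definition pivot_mx : 'M[R]_(m, N) :=
  \matrix_(i, j) (G i j - G i k * (G^T *m z) j 0 / g).
Definition pivot_rhs : 'cV[R]_m := \col_i (d i 0 - G i k * (d^T *m z) 0 0 / g).

Lemma pivot_mxE (w : 'cV[R]_m) j :
  (pivot_mx^T *m w) j 0 = (G^T *m w) j 0 - (G^T *m z) j 0 * (G^T *m w) k 0 / g.
Proof.
rewrite !(trmx_mul_entry _ w) mulr_sumr mulr_suml -sumrB.
by apply: eq_bigr => i _; rewrite [pivot_mx _ _]mxE; field.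
Qed.

Lemma pivot_rhsE (w : 'cV[R]_m) :
  (pivot_rhs^T *m w) 0 0 = (d^T *m w) 0 0 - (d^T *m z) 0 0 * (G^T *m w) k 0 / g.
Proof.
rewrite !(trmx_mul_entry _ w) mulr_sumr mulr_suml -sumrB.
by apply: eq_bigr => i _; rewrite [pivot_rhs _ _]mxE; field.
Qed.

(* A separating vector of the pivoted problem, corrected along [z]. *)
Lemma pivot_dual (z' : 'cV[R]_m) :
  dual_signed_by cp' cn' (pivot_mx^T *m z') -> 0 < (pivot_rhs^T *m z') 0 0 ->
  exists z'', dual_signed_by cp cn (G^T *m z'') /\ 0 < (d^T *m z'') 0 0.
Proof.
move=> dual' sep'; set t := (G^T *m z') k 0 / g.
have shiftE (X : 'M[R]_(m, N)) : (X^T *m (z' - t *: z)) = X^T *m z' - t *: (X^T *m z).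
  by rewrite mulmxBr scalemxAr.
exists (z' - t *: z); split; last first.
  rewrite mulmxBr -scalemxAr entry_subZ; move: sep'; rewrite pivot_rhsE /t.
  by congr (0 < _); field.
move=> j; rewrite shiftE entry_subZ.
have [->|jk] := eqVneq j k.
  by rewrite /t -/g divfK // subrr lexx.
have := dual' j; rewrite pivot_mxE /cp' /cn' jk !andbT /t.
by rewrite (mulrC ((G^T *m z') k 0 / g)) mulrA.
Qed.

(* A sign-constrained solution of the pivoted problem, corrected along
   column [k]. *)
Lemma pivot_primal nu :
  signed_by cp' cn' nu -> pivot_mx *m nu = pivot_rhs ->
  exists nu', signed_by cp cn nu' /\ G *m nu' = d.
Proof.
move=> snu Gnu.
have nuk : nu k 0 = 0.
  have [h1 h2] := snu k; rewrite /cp' /cn' eqxx !andbF in h1 h2.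
  by case: (ltrgt0P (nu k 0)) => // [/h1|/h2].
pose S := \sum_j (G^T *m z) j 0 * nu j 0.
have S_le0 : S <= 0.
  apply: sumr_le0 => j _; have [h1 h2] := snu j; have [zp zn] := z_dual j.
  case: (ltrgt0P (nu j 0)) => [p|n|->]; last by rewrite mulr0.
    by rewrite mulr_le0_ge0 ?zp ?h1 // ltW.
  by rewrite mulr_ge0_le0 ?zn ?h2 // ltW.
pose th := ((d^T *m z) 0 0 - S) / g.
have num_gt0 : 0 < (d^T *m z) 0 0 - S by rewrite subr_gt0 (le_lt_trans S_le0).
exists (nu + th *: delta_mx k 0); split.
  move=> j; rewrite !mxE; have [->|jk] := eqVneq j k.
    rewrite nuk add0r eqxx mulr1 /th; split => h.
      by apply: g_cp; move: h; rewrite pmulr_rgt0 // invr_gt0.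
    by apply: g_cn; move: h; rewrite pmulr_rlt0 // invr_lt0.
  rewrite /= mulr0 addr0; have [h1 h2] := snu j.
  by split => [/h1|/h2] /andP[].
rewrite mulmxDr -scalemxAr -colE; apply/colP => i.
have := congr1 (fun v : 'cV_m => v i 0) Gnu; rewrite /= [pivot_rhs _ _]mxE mxE => Gnu_i.
have pivot_row : \sum_j pivot_mx i j * nu j 0 =
    \sum_j G i j * nu j 0 - G i k / g * S.
  by rewrite mulr_sumr -sumrB; apply: eq_bigr => j _; rewrite [pivot_mx _ _]mxE; field.
rewrite pivot_row in Gnu_i; rewrite !mxE.
have -> : \sum_j G i j * nu j 0 = d i 0 - G i k * (d^T *m z) 0 0 / g + G i k / g * S.
  by rewrite -Gnu_i; ring.
by rewrite /th; field.
Qed.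

End Pivot.

(* Farkas' lemma with sign constraints, by induction on the number of
   constrained columns: drop the constraint at an active column [k]; if the
   resulting separator violates it, pivot on [k]. *)
Lemma farkas m N (cp cn : 'I_N -> bool) (G : 'M[R]_(m, N)) d : farkas_alt cp cn G d.
Proof.
move: {2}#|_| (leqnn #|[pred j | cp j || cn j]|) => s.
elim: s cp cn G d => [|s IH] cp cn G d hs.
  apply: farkas_inactive => j; move: hs; rewrite leqn0 => /eqP/card0_eq/(_ j).
  by rewrite !inE -negb_or => ->.
have [k /= k_act|none] := pickP [pred j | cp j || cn j]; last first.
  by apply: farkas_inactive => j; have := none j; rewrite /= -negb_or => ->.
pose cp' j := cp j && (j != k); pose cn' j := cn j && (j != k).
have hs' : (#|[pred j | cp' j || cn' j]| <= s)%N.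
  move: hs; rewrite (cardD1 k) inE /= k_act add1n ltnS; apply: leq_trans.
  apply: subset_leq_card; apply/subsetP => j; rewrite !inE /cp' /cn'.
  by case/orP => /andP[-> ->]; rewrite ?orbT.
have weaken nu : signed_by cp' cn' nu -> signed_by cp cn nu.
  by move=> snu j; have [h1 h2] := snu j; split => [/h1|/h2] /andP[].
case: (IH cp' cn' G d hs') => [[nu [snu Gnu]]|[z [z_dual z_sep]]].
  by left; exists nu; split => //; apply: weaken.
set g := (G^T *m z) k 0.
have [k_ok|k_bad] := boolP ((cp k ==> (g <= 0)) && (cn k ==> (0 <= g))).
  right; exists z; split => // j; have [->|jk] := eqVneq j k.
    by move: k_ok => /andP[/implyP h1 /implyP h2].
  by have := z_dual j; rewrite /cp' /cn' jk !andbT.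
have g_cp : 0 < g -> cp k.
  by move=> gp; apply: contraR k_bad => /negbTE->; rewrite /= implybE ltW ?orbT.
have g_cn : g < 0 -> cn k.
  by move=> gn; apply: contraR k_bad => /negbTE->; rewrite andbT implybE ltW ?orbT.
have g_neq0 : g != 0 by apply: contra k_bad => /eqP ->; rewrite lexx !implybT.
case: (IH cp' cn' (pivot_mx G z k) (pivot_rhs G d z k) hs') =>
    [[nu [snu Gnu]]|[z' [z'_dual z'_sep]]].
  by left; apply: (pivot_primal z_dual z_sep g_cp g_cn g_neq0 snu Gnu).
by right; apply: (pivot_dual g_neq0 z'_dual z'_sep).
Qed.

End Farkas.

Section Caratheodory.
Variable R : realFieldType.

Definition indep_cols m k (C : 'M[R]_(m, k)) : Prop :=
  forall b : 'cV[R]_k, C *m b = 0 -> b = 0.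

Lemma indep_colsP m k (C : 'M[R]_(m, k)) : indep_cols C <-> row_free C^T.
Proof.
split => [C_inj|/row_freeP [B CB] b Cb].
  rewrite -kermx_eq0; apply/rowV0P => v /sub_kermxP vC.
  apply: trmx_inj; rewrite trmx0; apply: C_inj.
  by rewrite -[C]trmxK -trmx_mul vC trmx0.
by rewrite -[b]mul1mx -trmx1 -CB trmx_mul trmxK -mulmxA Cb mulmx0.
Qed.

Lemma indep_cols_dec m k (C : 'M[R]_(m, k)) :
  indep_cols C \/ exists2 b : 'cV[R]_k, C *m b = 0 & b != 0.
Proof.
have [/indep_colsP|] := boolP (row_free C^T); first by left.
rewrite -kermx_eq0 => /rowV0Pn [v /sub_kermxP vC v0]; right; exists v^T.
  by rewrite -[C]trmxK -trmx_mul vC trmx0.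
by rewrite trmx_eq0.
Qed.

(* Moving [mu] along a nonzero direction [b] up to the first coordinate that
   vanishes: the ratio test of the simplex method.  No coordinate changes
   sign and one coordinate becomes zero. *)
Lemma ratio_test k (mu b : 'cV[R]_k) : b != 0 ->
  exists i0 t, (mu - t *: b) i0 0 = 0 /\
    forall i, (0 < (mu - t *: b) i 0 -> 0 < mu i 0) /\ ((mu - t *: b) i 0 < 0 -> mu i 0 < 0).
Proof.
case/cV0Pn => i1 bi1.
pose F i := `|mu i 0 / b i 0|.
case: (@arg_minP _ _ _ i1 (fun i => b i 0 != 0) F bi1) => i0 bi0 i0_min.
pose t := mu i0 0 / b i0 0.
exists i0, t; split; first by rewrite !mxE /t; field.
move=> i; rewrite !mxE; have [->|bi] := eqVneq (b i 0) 0; first by rewrite mulr0 subr0.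
have : `|t * b i 0| <= `|mu i 0|.
  have -> : `|mu i 0| = `|mu i 0 / b i 0| * `|b i 0| by rewrite -normrM divfK.
  by rewrite normrM ler_wpM2r //; exact: i0_min.
move: (mu i 0) (t * b i 0) => x y; rewrite ler_norml => /andP[h1 h2].
by move: h1 h2; case: (lerP 0 x) => hx;
  [rewrite ger0_norm // | rewrite ltr0_norm //] => h1 h2; split => ?; lra.
Qed.

Lemma caratheodory m n (A : 'M[R]_(m, n)) (cp cn : 'I_n -> bool) k
    (f : 'I_k -> 'I_n) (mu : 'cV[R]_k) :
  injective f -> signed_by (cp \o f) (cn \o f) mu ->
  exists k' (f' : 'I_k' -> 'I_n) (mu' : 'cV[R]_k'),
    [/\ injective f', signed_by (cp \o f') (cn \o f') mu',
        colsub f' A *m mu' = colsub f A *m mu & indep_cols (colsub f' A)].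
Proof.
elim: k f mu => [|k IH] f mu f_inj smu.
  by exists 0%N, f, mu; split => // b _; exact: flatmx0.
have [indep|[b Cb b0]] := indep_cols_dec (colsub f A); first by exists k.+1, f, mu.
have [i0 [t [mu1_i0 mu1_sign]]] := ratio_test mu b0.
set mu1 := mu - t *: b in mu1_i0 mu1_sign.
have Cmu1 : colsub f A *m mu = colsub f A *m mu1.
  by rewrite /mu1 mulmxBr -scalemxAr Cb scaler0 subr0.
pose mu' := \col_i mu1 (lift i0 i) 0.
have [||k' [f' [mu'' [f'_inj smu'' Cmu'' indep]]]] := IH (f \o lift i0) mu'.
- by move=> a c /f_inj /lift_inj.
- move=> i; rewrite mxE; have [s1 s2] := mu1_sign (lift i0 i).
  by have [h1 h2] := smu (lift i0 i); split => h; [exact: h1 (s1 h) | exact: h2 (s2 h)].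
exists k', f', mu''; split => //; rewrite Cmu'' Cmu1.
apply/colP => r; rewrite [RHS]mxE (bigD1_ord i0) //= mu1_i0 mulr0 add0r.
by rewrite mxE; apply: eq_bigr => i _; rewrite !mxE.
Qed.

End Caratheodory.

Section Spectral.
Variable R : rcfType.
Local Notation toC := (real_complex R).
Local Open Scope sesquilinear_scope.

Lemma eigenvalue_toC m (M : 'M[R]_m) (a : R) :
  eigenvalue (map_mx toC M) (toC a) = eigenvalue M a.
Proof. by rewrite !eigenvalue_root_char -map_char_poly fmorph_root. Qed.

Lemma conj_toC (x : R) : (toC x)^* = toC x.
Proof. by apply/conj_Creal/complex_realP; exists x. Qed.

Lemma trmx_toC m n (A : 'M[R]_(m, n)) : map_mx toC A^T = (map_mx toC A)^t*.
Proof. by apply/matrixP => i j; rewrite !mxE conj_toC. Qed.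

(* Spectral theory of a nonzero real symmetric positive semidefinite matrix,
   through the spectral theorem for its (hermitian) complexification
   [M = P^* diag(D) P] with [P] unitary. *)
Section SymmetricPSD.
Variables (m : nat) (M : 'M[R]_m).
Hypothesis M_sym : M^T = M.
Hypothesis M_psd : forall v : 'rV[R[i]]_m, 0 <= (v *m map_mx toC M *m v^t*) 0 0.

Let Mc := map_mx toC M.
Let P := spectralmx Mc.
Let D := spectral_diag Mc.
Let d i := complex.Re (D 0 i).

Lemma Mc_herm : Mc \is hermsymmx.
Proof.
apply: realsym_hermsym.
  by apply/is_hermitianmxP; rewrite expr0 scale1r map_mx_id // map_trmx M_sym.
by apply/mxOverP => i j; rewrite mxE; apply/complex_realP; exists (M i j).
Qed.

Lemma P_unitary : P *m P^t* = 1%:M.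
Proof. exact/unitarymxP/spectral_unitarymx. Qed.

Lemma Mc_spectral : Mc = P^t* *m diag_mx D *m P.
Proof.
have /orthomx_spectralP := hermitian_normalmx Mc_herm.
by rewrite invmx_unitary //; exact: spectral_unitarymx.
Qed.

Lemma D_real i : D 0 i = toC (d i).
Proof. by have /mxOverP Dr := hermitian_spectral_diag_real Mc_herm; rewrite /d RRe_real. Qed.

Lemma row_P_eigen i : row i P *m Mc = D 0 i *: row i P.
Proof.
rewrite Mc_spectral rowE !mulmxA -(mulmxA _ P) P_unitary mulmx1 -rowE row_diag_mx.
by rewrite -scalemxAl -rowE.
Qed.

Lemma row_P_unit i : (row i P *m (row i P)^t*) 0 0 = 1.
Proof.
have -> : (row i P *m (row i P)^t*) 0 0 = (P *m P^t*) i i.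
  by rewrite !mxE; apply: eq_bigr => j _; rewrite !mxE.
by rewrite P_unitary mxE eqxx.
Qed.

Lemma d_eigenvalue i : eigenvalue M (d i).
Proof.
rewrite -eigenvalue_toC -D_real; apply/eigenvalueP; exists (row i P).
  exact: row_P_eigen.
apply/eqP => Pi0; have := row_P_unit i; rewrite Pi0 mul0mx mxE => /eqP.
by rewrite eq_sym oner_eq0.
Qed.

Lemma d_ge0 i : 0 <= d i.
Proof. by have := M_psd (row i P); rewrite row_P_eigen -scalemxAl mxE row_P_unit mulr1 D_real ler0c. Qed.

Lemma eigenvalue_d l : eigenvalue M l -> exists i, d i = l.
Proof.
rewrite -eigenvalue_toC => /eigenvalueP [v vM v0].
set u := v *m P^t*.
have uD : u *m diag_mx D = toC l *: u.
  have := congr1 (fun X => X *m P^t*) vM.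
  by rewrite /= -/Mc Mc_spectral !mulmxA -(mulmxA _ P) P_unitary mulmx1 -scalemxAl.
have /rV0Pn [j uj] : u != 0.
  apply: contraNneq v0 => u0; rewrite -[v]mulmx1 -(mulmx1C P_unitary) mulmxA -/u u0.
  by rewrite mul0mx.
move/rowP: uD => /(_ j); rewrite mul_mx_diag [LHS]mxE [RHS]mxE => e.
by exists j; apply: complexI; rewrite -D_real; apply: (mulIf uj); rewrite mulrC e.
Qed.

Lemma quad_diag (u : 'rV[R[i]]_m) (E : 'rV[R[i]]_m) :
  (u *m diag_mx E *m u^t*) 0 0 = \sum_j E 0 j * (u 0 j * (u 0 j)^*).
Proof.
rewrite mul_mx_diag !mxE; apply: eq_bigr => j _; rewrite !mxE.
by rewrite mulrAC mulrC.
Qed.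

Lemma quad_spectral (w : 'rV[R]_m) (u := map_mx toC w *m P^t*) :
  toC ((w *m M *m w^T) 0 0) = \sum_j toC (d j) * (u 0 j * (u 0 j)^*) /\
  toC ((w *m M *m M *m w^T) 0 0) = \sum_j toC (d j * d j) * (u 0 j * (u 0 j)^*).
Proof.
have uT : u^t* = P *m (map_mx toC w)^t* by rewrite /u trmx_mul map_mxM trmxCK.
have toC00 (X : 'M[R]_1) : toC (X 0 0) = (map_mx toC X) 0 0 by rewrite mxE.
split.
  rewrite toC00 !map_mxM trmx_toC -/Mc Mc_spectral !mulmxA -/u -mulmxA -uT quad_diag.
  by apply: eq_bigr => j _; rewrite D_real.
rewrite toC00 !map_mxM trmx_toC -/Mc Mc_spectral !mulmxA -/u.
rewrite -(mulmxA _ P (P^t*)) P_unitary mulmx1 -mulmxA -uT -(mulmxA u) mulmx_diag quad_diag.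
by apply: eq_bigr => j _; rewrite mxE !D_real rmorphM.
Qed.

Lemma min_pos_eigenvalue : M != 0 ->
  exists l, lambda_min_pp M l /\
    forall w : 'rV[R]_m, l * (w *m M *m w^T) 0 0 <= (w *m M *m M *m w^T) 0 0.
Proof.
move=> M0.
have [i0 di0] : exists i, 0 < d i.
  apply/existsP; apply: contraNT M0 => /existsPn d_nonpos.
  have D0 : D = 0.
    apply/rowP => k; rewrite [RHS]mxE D_real.
    by have := d_nonpos k; rewrite lt0r d_ge0 andbT negbK => /eqP ->; rewrite rmorph0.
  by rewrite -(map_mx_eq0 toC) -/Mc Mc_spectral D0 linear0 mulmx0 mul0mx.
case: (@arg_minP _ _ _ i0 (fun i => 0 < d i) d di0) => i d_pos d_min.
exists (d i); split.
  by split; [exact: d_eigenvalue | split=> // l' /eigenvalue_d [j <-]; exact: d_min].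
move=> w; have [quadM quadM2] := quad_spectral w.
rewrite -subr_ge0 -ler0c.
have -> : toC ((w *m M *m M *m w^T) 0 0 - d i * (w *m M *m w^T) 0 0) =
    toC ((w *m M *m M *m w^T) 0 0) - toC (d i) * toC ((w *m M *m w^T) 0 0).
  by rewrite rmorphB rmorphM.
rewrite quadM quadM2 subr_ge0 mulr_sumr.
apply: ler_sum => j _; rewrite mulrA -subr_ge0 -mulrBl mulr_ge0 ?mul_conjC_ge0 //.
rewrite -rmorphM -rmorphB ler0c subr_ge0.
have [->|dj_pos] := eqVneq (d j) 0; first by rewrite !mulr0.
by rewrite ler_pM2r ?d_min // lt0r dj_pos d_ge0.
Qed.

End SymmetricPSD.
End Spectral.

Section GramBound.
Variable R : rcfType.
Local Open Scope sesquilinear_scope.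

Lemma norm2sq_tr n (x : 'cV[R]_n) : norm2sq x = (x^T *m x) 0 0.
Proof. by rewrite /norm2sq mxE; apply: eq_bigr => i _; rewrite !mxE expr2. Qed.

Lemma gram_psd m k (C : 'M[R]_(m, k)) (v : 'rV[R[i]]_m) :
  0 <= (v *m map_mx (real_complex R) (C *m C^T) *m v^t*) 0 0.
Proof.
pose x := v *m map_mx (real_complex R) C.
have -> : v *m map_mx (real_complex R) (C *m C^T) *m v^t* = x *m x^t*.
  by rewrite map_mxM trmx_toC /x trmx_mul map_mxM !mulmxA.
rewrite mxE; apply: sumr_ge0 => j _; rewrite !mxE; exact: mul_conjC_ge0.
Qed.

(* Writing [mu = C^T w],
   [|mu|^2] and [|C mu|^2] are the quadratic forms of [C C^T] and of its
   square at [w]. *)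
Lemma gram_lower_bound m k (C : 'M[R]_(m, k)) : indep_cols C -> (0 < k)%N ->
  exists l : R, lambda_min_pp (C *m C^T) l /\
    forall mu : 'cV_k, l * norm2sq mu <= norm2sq (C *m mu).
Proof.
move=> /indep_colsP /row_freeP [B CB] k_gt0.
set M := C *m C^T.
have M_sym : M^T = M by rewrite /M trmx_mul trmxK.
have M0 : M != 0.
  apply/eqP => M0; have : B^T *m M *m B = 1%:M.
    by rewrite /M !mulmxA -mulmxA CB mulmx1 -[C]trmxK -trmx_mul CB trmx1.
  rewrite M0 mulmx0 mul0mx => /matrixP /(_ (Ordinal k_gt0) (Ordinal k_gt0)).
  by rewrite !mxE eqxx => /eqP; rewrite eq_sym oner_eq0.
have [l [lmin lbound]] := min_pos_eigenvalue M_sym (@gram_psd _ _ C) M0.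
exists l; split => // mu.
have CTw : C^T *m (B *m mu) = mu by rewrite mulmxA CB mul1mx.
have := lbound (B *m mu)^T; rewrite trmxK !norm2sq_tr.
have -> : (B *m mu)^T *m M *m (B *m mu) = mu^T *m mu.
  by rewrite -[in RHS]CTw [in RHS]trmx_mul trmxK /M !mulmxA.
have -> : (B *m mu)^T *m M *m M *m (B *m mu) = (C *m mu)^T *m (C *m mu).
  by rewrite -[in RHS]CTw [in RHS]trmx_mul [in RHS]trmx_mul trmxK /M !mulmxA.
by apply.
Qed.
End GramBound.

Section Projection.
Variable R : rcfType.

Lemma inner_tr n (u v : 'cV[R]_n) : inner u v = (u^T *m v) 0 0.
Proof. by rewrite /inner mxE; apply: eq_bigr => i _; rewrite mxE. Qed.

Lemma norm2sq_ge0 n (x : 'cV[R]_n) : 0 <= norm2sq x.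
Proof. by apply: sumr_ge0 => i _; exact: sqr_ge0. Qed.

Lemma norm2sq_subZ n (d z : 'cV[R]_n) e :
  norm2sq (d - e *: z) = norm2sq d - 2 * e * inner d z + e ^+ 2 * norm2sq z.
Proof.
rewrite /norm2sq /inner (eq_bigr (fun i =>
  d i 0 ^+ 2 - 2 * e * (d i 0 * z i 0) + e ^+ 2 * z i 0 ^+ 2)) => [|i _].
  by rewrite big_split sumrB /= -!mulr_sumr.
by rewrite !mxE; ring.
Qed.

Lemma proj_first_order m (S : 'cV[R]_m -> Prop) (y p z : 'cV[R]_m) e :
  is_proj S y p -> 0 < e -> S (p + e *: z) -> 2 * inner (y - p) z <= e * norm2sq z.
Proof.
move=> [_ p_min] e_gt0 /p_min.
rewrite opprD addrA norm2sq_subZ -subr_ge0.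
have -> : norm2sq (y - p) - 2 * e * inner (y - p) z + e ^+ 2 * norm2sq z - norm2sq (y - p) =
    e * (e * norm2sq z - 2 * inner (y - p) z) by ring.
by rewrite pmulr_rge0 // subr_ge0.
Qed.

Lemma small_step n (a c : 'I_n -> R) (a0 c0 : R) :
  (forall j, 0 <= a j) -> (forall j, 0 < c j) -> 0 <= a0 -> 0 < c0 ->
  exists e, [/\ 0 < e, e * a0 < c0 & forall j, e * a j < c j].
Proof.
move=> a_ge0 c_gt0 a0_ge0 c0_gt0.
have ac_ge0 j : 0 <= a j / c j by rewrite divr_ge0 // ltW.
pose X := a0 / c0 + \sum_j a j / c j.
have X_ge0 : 0 <= X by rewrite addr_ge0 ?divr_ge0 ?sumr_ge0 // ltW.
have below (x : R) : 0 <= x -> x <= X -> (1 + X)^-1 * x < 1.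
  by move=> x0 xX; rewrite mulrC ltr_pdivrMr; lra.
have a0c0_ge0 : 0 <= a0 / c0 by rewrite divr_ge0 // ltW.
exists (1 + X)^-1; split; first by rewrite invr_gt0; lra.
  rewrite -[c0]mul1r -ltr_pdivrMr // -mulrA; apply: below => //.
  by rewrite /X lerDl sumr_ge0.
move=> j; rewrite -[c j]mul1r -ltr_pdivrMr // -mulrA; apply: below => //.
have : a j / c j <= \sum_i a i / c i by rewrite (bigD1 j) //= lerDl sumr_ge0.
rewrite /X; lra.
Qed.

End Projection.

Section DualSolutionSet.
Variable R : rcfType.
Variables (m n : nat) (A : 'M[R]_(m, n)) (alpha : R) (xs : 'cV[R]_n).
Hypothesis alpha_gt0 : 0 < alpha.

Lemma YstarP q : Ystar A alpha xs q <-> forall j, alpha * soft ((A^T *m q) j 0) = xs j 0.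
Proof.
split=> [Yq j | Yq]; first by rewrite -Yq !mxE.
by apply/colP => j; rewrite -Yq !mxE.
Qed.

(* The sign constraints active at [p]: a coordinate [j] of a direction may
   increase (resp. decrease) [(A^T p)_j] without leaving [Y*] unless [j] is in
   the support of [xs] or [(A^T p)_j] sits at the kink [1] (resp. [-1]). *)
Definition act_pos (p : 'cV[R]_m) j := (xs j 0 != 0) || ((A^T *m p) j 0 == 1).
Definition act_neg (p : 'cV[R]_m) j := (xs j 0 != 0) || ((A^T *m p) j 0 == -1).

Lemma feasible_direction p z e :
  Ystar A alpha xs p -> dual_signed_by (act_pos p) (act_neg p) (A^T *m z) -> 0 < e ->
  (forall j, e * `|(A^T *m z) j 0| < slack ((A^T *m p) j 0)) ->
  Ystar A alpha xs (p + e *: z).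
Proof.
move=> /YstarP Yp z_dual e_gt0 small; apply/YstarP => j.
have -> : (A^T *m (p + e *: z)) j 0 = (A^T *m p) j 0 + e * (A^T *m z) j 0.
  by rewrite mulmxDr -scalemxAr !mxE.
have := small j; have := Yp j; have [h1 h2] := z_dual j; rewrite /act_pos /act_neg in h1 h2.
set v := (A^T *m p) j 0; set g := (A^T *m z) j 0 => Ypj small_j.
have [xj|xj] := eqVneq (xs j 0) 0; last first.
  have -> : g = 0 by apply/eqP; rewrite eq_le h1 ?xj // h2 ?xj.
  by rewrite mulr0 addr0.
rewrite xj eqxx /= in h1 h2 Ypj *.
have sv0 : soft v = 0 by move/eqP: Ypj; rewrite mulf_eq0 gt_eqF // => /eqP.
rewrite soft_zero_step ?mulr0 //.
- by case: (soft_cases v) => [[? ?]|[? ?]|[? ? _]]; apply/andP; split; lra.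
- by rewrite normrM gtr0_norm.
- by move=> /eqP/h1 g_le0; rewrite pmulr_rle0.
- by move=> /eqP/h2 g_ge0; rewrite pmulr_rge0.
Qed.

Lemma no_separation y p z :
  is_proj (Ystar A alpha xs) y p -> dual_signed_by (act_pos p) (act_neg p) (A^T *m z) ->
  inner (y - p) z <= 0.
Proof.
move=> proj z_dual; rewrite leNgt; apply/negP => sep.
have [e [e_gt0 e_z e_g]] := @small_step R n (fun j => `|(A^T *m z) j 0|)
  (fun j => slack ((A^T *m p) j 0)) (norm2sq z) (inner (y - p) z)
  (fun j => normr_ge0 _) (fun j => slack_gt0 _) (norm2sq_ge0 z) sep.
have := proj_first_order proj e_gt0 (feasible_direction proj.1 z_dual e_gt0 e_g).
lra.
Qed.

Lemma conic_decomposition y p :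
  is_proj (Ystar A alpha xs) y p ->
  exists k (f : 'I_k -> 'I_n) (mu : 'cV[R]_k),
    [/\ injective f, signed_by (act_pos p \o f) (act_neg p \o f) mu,
        colsub f A *m mu = y - p & indep_cols (colsub f A)].
Proof.
move=> proj.
case: (farkas (act_pos p) (act_neg p) A (y - p)) => [[nu [snu Anu]]|[z [z_dual z_sep]]];
  last by have := no_separation proj z_dual; rewrite inner_tr leNgt z_sep.
have [k [f [mu [f_inj smu Cmu indep]]]] :=
  @caratheodory _ _ _ A (act_pos p) (act_neg p) _ id nu (@inj_id _) snu.
exists k, f, mu; split => //; rewrite Cmu -Anu; congr (_ *m _).
by apply/matrixP => i j; rewrite mxE.
Qed.

Lemma growth_active p j nu w c :
  Ystar A alpha xs p -> 0 <= c -> c <= alpha ->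
  (forall i, xs i 0 != 0 -> c <= alpha * `|xs i 0| / (`|xs i 0| + 2 * alpha)) ->
  (0 < nu -> act_pos p j) -> (nu < 0 -> act_neg p j) -> 0 < nu * w ->
  c * w ^+ 2 <= alpha * w * (soft ((A^T *m p) j 0 + w) - soft ((A^T *m p) j 0)).
Proof.
move=> /YstarP Yp c_ge0 c_le c_min act_p act_n nu_w.
rewrite /act_pos /act_neg in act_p act_n.
have [xj|xj] := eqVneq (xs j 0) 0; last first.
  have den_gt0 : 0 < `|xs j 0| + 2 * alpha by rewrite ltr_wpDl // mulr_gt0.
  apply: soft_growth_active => //; first by apply: contra xj => /eqP sv; rewrite -Yp sv mulr0.
  by rewrite Yp -ler_pdivlMr // c_min.
rewrite xj eqxx /= in act_p act_n.
have [nu_gt0|nu_lt0|nu0] := ltrgt0P nu; last by rewrite nu0 mul0r ltxx in nu_w.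
  by rewrite (eqP (act_p nu_gt0)) soft_growth_kink // -(pmulr_rgt0 _ nu_gt0).
by rewrite (eqP (act_n nu_lt0)) soft_growth_kinkN // -(nmulr_rgt0 _ nu_lt0).
Qed.

End DualSolutionSet.

Section WeightedBound.
Variable R : realFieldType.

(* Young's inequality [2 lam c (mu w) <= lam^2 c mu^2 + c w^2], in a form
   needing the quadratic control [c w^2 <= t] only when [mu w > 0] (otherwise
   the left side is nonpositive). *)
Lemma young_signed (lam c mu w t : R) : 0 < lam -> 0 < c -> 0 <= t ->
  (0 < mu * w -> c * w ^+ 2 <= t) ->
  2 * lam * c * (mu * w) <= lam ^+ 2 * c * mu ^+ 2 + t.
Proof.
move=> lam_gt0 c_gt0 t_ge0 growth.
have lhs_ge0 : 0 <= lam ^+ 2 * c * mu ^+ 2.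
  by apply: mulr_ge0; [apply: mulr_ge0; [apply: sqr_ge0 | lra] | apply: sqr_ge0].
have [muw_le0|muw_gt0] := lerP (mu * w) 0.
  have : 2 * lam * c * (mu * w) <= 0.
    by apply: mulr_ge0_le0 => //; apply: mulr_ge0; [apply: mulr_ge0|]; lra.
  lra.
have := growth muw_gt0; have := mulr_ge0 (ltW c_gt0) (sqr_ge0 (lam * mu - w)).
have -> : c * (lam * mu - w) ^+ 2 =
  lam ^+ 2 * c * mu ^+ 2 + c * w ^+ 2 - 2 * lam * c * (mu * w) by ring.
lra.
Qed.

Lemma sum_injective_le k n (f : 'I_k -> 'I_n) (F : 'I_n -> R) :
  injective f -> (forall j, 0 <= F j) -> \sum_i F (f i) <= \sum_j F j.
Proof.
move=> f_inj F_ge0.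
rewrite [X in _ <= X](bigID (mem (f @: [set: 'I_k]))) /= big_imset /=; last first.
  by move=> a c _ _ /f_inj.
have -> : \sum_(i in [set: 'I_k]) F (f i) = \sum_i F (f i).
  by apply: eq_bigl => i; rewrite in_setT.
by rewrite -[X in X <= _]addr0 lerD ?sumr_ge0.
Qed.

End WeightedBound.

Section Combination.
Variable R : rcfType.

Lemma norm2sq_combination m n k (A : 'M[R]_(m, n)) (f : 'I_k -> 'I_n) (mu : 'cV[R]_k) d :
  colsub f A *m mu = d -> norm2sq d = \sum_i mu i 0 * (A^T *m d) (f i) 0.
Proof.
move=> Cmu.
have -> : norm2sq d = \sum_r d r 0 * (colsub f A *m mu) r 0.
  by rewrite Cmu /norm2sq; apply: eq_bigr => r _; rewrite expr2.
under eq_bigr => r _ do rewrite mxE mulr_sumr.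
rewrite exchange_big; apply: eq_bigr => i _ /=.
rewrite mxE mulr_sumr; apply: eq_bigr => r _; rewrite !mxE; ring.
Qed.

Lemma weighted_descent k n (f : 'I_k -> 'I_n) (mu : 'cV[R]_k) (w t : 'I_n -> R) (lam c D : R) :
  injective f -> 0 < lam -> 0 < c -> (forall j, 0 <= t j) ->
  D = \sum_i mu i 0 * w (f i) -> lam * norm2sq mu <= D ->
  (forall i, 0 < mu i 0 * w (f i) -> c * w (f i) ^+ 2 <= t (f i)) ->
  lam * c * D <= \sum_j t j.
Proof.
move=> f_inj lam_gt0 c_gt0 t_ge0 D_def mu_le growth.
have young : 2 * lam * c * D <= lam ^+ 2 * c * norm2sq mu + \sum_i t (f i).
  rewrite D_def /norm2sq !mulr_sumr -big_split /=.
  by apply: ler_sum => i _; apply: young_signed => //; exact: growth.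
have := sum_injective_le f_inj t_ge0.
have : lam * c * (lam * norm2sq mu) <= lam * c * D by rewrite ler_wpM2l // ltW ?mulr_gt0.
move: young; rewrite expr2; lra.
Qed.

Lemma lambdaA_lower_bound m n k (A : 'M[R]_(m, n)) (f : 'I_k -> 'I_n) (mu : 'cV[R]_k) lamA :
  is_lambdaA A lamA -> injective f -> indep_cols (colsub f A) ->
  lamA * norm2sq mu <= norm2sq (colsub f A *m mu).
Proof.
move=> [_ lamA_min] f_inj indep.
have [k0|k_gt0] := posnP k.
  by subst k; rewrite [norm2sq mu]/norm2sq big_ord0 mulr0 norm2sq_ge0.
have [l [l_min l_bound]] := gram_lower_bound indep k_gt0.
have C0 : colsub f A != 0.
  apply/eqP => C0; have := indep (delta_mx (Ordinal k_gt0) 0).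
  rewrite C0 mul0mx => /(_ erefl) /matrixP /(_ (Ordinal k_gt0) 0).
  by rewrite !mxE !eqxx => /eqP; rewrite oner_eq0.
have lamA_le : lamA <= l by apply: lamA_min; exists k, f.
apply: le_trans (l_bound mu); rewrite ler_wpM2r ?norm2sq_ge0 //.
Qed.

End Combination.

(* The gradient pairing [<y - p, grad f(y)>] for [p] in [Y*] splits into
   the scalar increments of [soft] along [A^T (y - p)]: as [b = A xs] and
   [xs = alpha shrink (A^T p)], [grad f(y) = alpha A (shrink (A^T y) -
   shrink (A^T p))]. *)
Lemma inner_grad (R : rcfType) m n (A : 'M[R]_(m, n)) (b : 'cV[R]_m) (alpha : R)
    (xs : 'cV[R]_n) (y p : 'cV[R]_m) :
  A *m xs = b -> Ystar A alpha xs p ->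
  inner (y - p) (gradf A b alpha y) =
  \sum_j alpha * (A^T *m (y - p)) j 0 *
     (soft ((A^T *m p) j 0 + (A^T *m (y - p)) j 0) - soft ((A^T *m p) j 0)).
Proof.
move=> Axs Yp.
have Ay j : (A^T *m p) j 0 + (A^T *m (y - p)) j 0 = (A^T *m y) j 0.
  have -> : A^T *m y = A^T *m p + A^T *m (y - p) by rewrite -mulmxDr addrC subrK.
  by rewrite [in RHS]mxE.
under [RHS]eq_bigr do rewrite Ay.
set s := shrink (A^T *m y) - shrink (A^T *m p).
have gradE : gradf A b alpha y = alpha *: (A *m s).
  by rewrite /gradf -Axs -Yp /s mulmxBr scalerBr -scalemxAr addrC.
have sE j : s j 0 = soft ((A^T *m y) j 0) - soft ((A^T *m p) j 0) by rewrite /s !mxE.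
rewrite gradE /inner.
rewrite (eq_bigr (fun r => \sum_j alpha * ((y - p) r 0 * A r j) * s j 0)); last first.
  by move=> r _; rewrite !mxE !mulr_sumr; apply: eq_bigr => j _; ring.
rewrite exchange_big; apply: eq_bigr => j _ /=.
rewrite [(A^T *m _) j 0]mxE mulr_sumr mulr_suml; apply: eq_bigr => r _.
by rewrite sE [A^T j r]mxE; ring.
Qed.

Theorem mainTheorem17 (R : rcfType) (m n : nat) (A : 'M[R]_(m, n)) (b : 'cV[R]_m)
  (alpha : R) (xs : 'cV[R]_n) (lamA c : R) :
  A != 0 -> b != 0 -> (exists x : 'cV[R]_n, A *m x = b) -> 0 < alpha ->
  P2sol A b alpha xs ->
  is_lambdaA A lamA -> is_supp_min alpha xs c ->
  0 < lamA * c /\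
  forall y p : 'cV[R]_m, is_proj (Ystar A alpha xs) y p ->
    lamA * c * norm2sq (y - p) <= inner (y - p) (gradf A b alpha y).
Proof.
move=> _ _ _ alpha_gt0 [Axs _] lamA_spec [[i0 [xi0 c_def]] c_min].
have lamA_gt0 : 0 < lamA by case: lamA_spec => -[k [f [_ [_ [_ []]]]]].
have den_gt0 : 0 < `|xs i0 0| + 2 * alpha by rewrite ltr_wpDl // mulr_gt0.
have c_gt0 : 0 < c by rewrite c_def divr_gt0 // mulr_gt0 // normr_gt0.
have c_le_alpha : c <= alpha.
  by rewrite c_def ler_pdivrMr // ler_pM2l // lerDl mulr_ge0 // ltW.
split=> [|y p proj]; first exact: mulr_gt0.
have [k [f [mu [f_inj smu Cmu indep]]]] := conic_decomposition alpha_gt0 proj.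
rewrite (inner_grad _ Axs proj.1).
apply: (weighted_descent (w := fun j => (A^T *m (y - p)) j 0) f_inj lamA_gt0 c_gt0).
- by move=> j; apply: soft_incr_ge0; exact: ltW.
- exact: norm2sq_combination Cmu.
- by rewrite -Cmu; exact: lambdaA_lower_bound.
- move=> i; have [act_p act_n] := smu i.
  exact: growth_active proj.1 (ltW c_gt0) c_le_alpha c_min act_p act_n.
Qed.
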